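(* For every finite set of ground terms $\Gamma$ and ground term $M$, the judgment $\Gamma\vdash M$ is provable in the natural deduction system $\mathcal N$ under theory $E$ if and only if the sequent $\downarrow\Gamma\vdash\downarrow M$ is provable in the sequent system $\mathcal D$.
   Context: Fix names, variables and constructors $\mathsf{pub}$ (unary), $\mathsf{sign},\mathsf{blind},\langle\cdot,\cdot\rangle,\{\cdot\}_\cdot$ (binary). Let $E$ be the union of AC-convergent equational theories $E_1,\dots,E_n$ with pairwise disjoint signatures $\Sigma_{E_i}$, disjoint from the constructors, each containing at most one associative-commutative (AC) binary symbol $\oplus_i$; $E$ is presented by a rewrite system $R_E$ terminating and confluent modulo AC; $\Sigma_E=\bigcup_i\Sigma_{E_i}$. Terms: names, variables, $\mathsf{pub}(M)$, $\mathsf{sign}(M,N)$, $\mathsf{blind}(M,N)$, $\langle M,N\rangle$, $\{M\}_N$, $g(M_1,\dots,M_j)$, $g\in\Sigma_E$. $\equiv$: equality modulo AC of all $\oplus_i$; $\approx_E$: equality modulo $E$; $\downarrow M$: $R_E$-normal form modulo AC; $\downarrow\Gamma$ elementwise. Guarded term: name, variable, or headed by a constructor. $E_i$-context: term with holes built only from symbols of $\Sigma_{E_i}$. A subterm occurrence $N$ of $M$ is a cross-theory subterm if headed by a symbol of some $\Sigma_{E_i}$ and it is an immediate argument of a subterm of $M$ headed by a symbol of $\Sigma_{E_j}$, $j\ne i$. $\Gamma,M$ means $\Gamma\cup\{M\}$. System $\mathcal N$: ($id$) $\Gamma\vdash M$ if $M\in\Gamma$; ($e_E$) from $\Gamma\vdash\{M\}_K$,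 $\Gamma\vdash K$ infer $\Gamma\vdash M$; ($e_I$) from $\Gamma\vdash M$, $\Gamma\vdash K$ infer $\Gamma\vdash\{M\}_K$; ($p_E$) from $\Gamma\vdash\langle M,N\rangle$ infer $\Gamma\vdash M$ and also $\Gamma\vdash N$; ($p_I$) from $\Gamma\vdash M,\Gamma\vdash N$ infer $\Gamma\vdash\langle M,N\rangle$; ($\mathsf{sign}_E$) from $\Gamma\vdash\mathsf{sign}(M,K)$, $\Gamma\vdash\mathsf{pub}(K)$ infer $\Gamma\vdash M$; ($\mathsf{sign}_I$) from $\Gamma\vdash M,\Gamma\vdash K$ infer $\Gamma\vdash\mathsf{sign}(M,K)$; ($\mathsf{blind}_{E1}$) from $\Gamma\vdash\mathsf{blind}(M,K)$, $\Gamma\vdash K$ infer $\Gamma\vdash M$; ($\mathsf{blind}_I$) from $\Gamma\vdash M,\Gamma\vdash K$ infer $\Gamma\vdash\mathsf{blind}(M,K)$; ($\mathsf{blind}_{E2}$) from $\Gamma\vdash\mathsf{sign}(\mathsf{blind}(M,R),K)$, $\Gamma\vdash R$ infer $\Gamma\vdash\mathsf{sign}(M,K)$; ($g_I$, $g\in\Sigma_E$) from $\Gamma\vdash M_1,\dots,\Gamma\vdash M_j$ infer $\Gamma\vdash g(M_1,\dots,M_j)$; ($\approx$) from $\Gamma\vdash N$ infer $\Gamma\vdash M$ if $M\approx_E N$. System $\mathcal D$ (sequents with all terms in normal form): ($id_{E_i}$, each $i$) $\Gamma\vdash M$ with no premise if $M\approx_E C[M_1,\dots,M_k]$ for an $E_i$-context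 $C$ and $M_l\in\Gamma$; (cut) from $\Gamma\vdash M$, $\Gamma,M\vdash T$ infer $\Gamma\vdash T$; ($p_L$) from $\Gamma,\langle M,N\rangle,M,N\vdash T$ infer $\Gamma,\langle M,N\rangle\vdash T$; ($p_R$) from $\Gamma\vdash M,\Gamma\vdash N$ infer $\Gamma\vdash\langle M,N\rangle$; ($e_L$) from $\Gamma,\{M\}_K\vdash K$ and $\Gamma,\{M\}_K,M,K\vdash N$ infer $\Gamma,\{M\}_K\vdash N$; ($e_R$) from $\Gamma\vdash M,\Gamma\vdash K$ infer $\Gamma\vdash\{M\}_K$; ($\mathsf{sign}_L$) from $\Gamma,\mathsf{sign}(M,K),\mathsf{pub}(L),M\vdash N$ infer $\Gamma,\mathsf{sign}(M,K),\mathsf{pub}(L)\vdash N$ if $K\equiv L$; ($\mathsf{sign}_R$) from $\Gamma\vdash M,\Gamma\vdash K$ infer $\Gamma\vdash\mathsf{sign}(M,K)$; ($\mathsf{blind}_{L1}$) from $\Gamma,\mathsf{blind}(M,K)\vdash K$ and $\Gamma,\mathsf{blind}(M,K),M,K\vdash N$ infer $\Gamma,\mathsf{blind}(M,K)\vdash N$; ($\mathsf{blind}_R$) from $\Gamma\vdash M,\Gamma\vdash K$ infer $\Gamma\vdash\mathsf{blind}(M,K)$; ($\mathsf{blind}_{L2}$) from $\Gamma,\mathsf{sign}(\mathsf{blind}(M,R),K)\vdash R$ and $\Gamma,\mathsf{sign}(\mathsf{blind}(M,R),K),\mathsf{sign}(M,K),R\vdash N$ infer $\Gamma,\mathsf{sign}(\mathsf{blind}(M,R),K)\vdash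 N$; ($gs$) from $\Gamma\vdash A$, $\Gamma,A\vdash M$ infer $\Gamma\vdash M$ if $A$ is a guarded subterm of a term in $\Gamma\cup\{M\}$; ($cs$) from $\Gamma\vdash N$, $\Gamma,N\vdash M$ infer $\Gamma\vdash M$ if $N$ is a cross-theory subterm of a term in $\Gamma\cup\{M\}$. *)

From Stdlib Require Import List Relations.
Import ListNotations.
Set Implicit Arguments.

(* Terms over a signature F of equational-theory symbols (Sigma_E). *)
Inductive term (F : Type) : Type :=
| Name  (n : nat)
| Var   (x : nat)
| Pub   (t : term F)
| Sign  (m k : term F)
| Blind (m k : term F)
| Pair  (m n : term F)
| Enc   (m k : term F)
| Fn    (f : F) (l : list (term F)).

Arguments Name {F}. Arguments Var {F}.

Section Theory.
Variable F : Type.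
Variable ar : F -> nat.
Variable ti : F -> nat.     (* index i of the theory E_i owning the symbol *)
Variable ac : F -> bool.    (* is the symbol the AC symbol (+)_i of its theory *)
Variable R : list (term F * term F).

Notation term := (term F).

Definition args_of (t : term) : list term :=
  match t with
  | Name _ | Var _ => []
  | Pub a => [a]
  | Sign a b | Blind a b | Pair a b | Enc a b => [a; b]
  | Fn _ l => l
  end.

Definition subterm : term -> term -> Prop :=
  clos_refl_trans term (fun a b => In a (args_of b)).

Definition ground (t : term) : Prop := forall x, ~ subterm (Var x) t.

Inductive wf : term -> Prop :=
| wf_name n : wf (Name n)
| wf_var x : wf (Var x)
| wf_pub a : wf a -> wf (Pub a)
| wf_sign a b : wf a -> wf b -> wf (Sign a b)
| wf_blind a b : wf a -> wf b -> wf (Blind a b)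
| wf_pair a b : wf a -> wf b -> wf (Pair a b)
| wf_enc a b : wf a -> wf b -> wf (Enc a b)
| wf_fn f l : length l = ar f -> (forall a, In a l -> wf a) -> wf (Fn f l).

Inductive pure (i : nat) : term -> Prop :=
| pure_var x : pure i (Var x)
| pure_fn f l : ti f = i -> (forall a, In a l -> pure i a) -> pure i (Fn f l).

Fixpoint subst (s : nat -> term) (t : term) : term :=
  match t with
  | Name n => Name n
  | Var x => s x
  | Pub a => Pub (subst s a)
  | Sign a b => Sign (subst s a) (subst s b)
  | Blind a b => Blind (subst s a) (subst s b)
  | Pair a b => Pair (subst s a) (subst s b)
  | Enc a b => Enc (subst s a) (subst s b)
  | Fn f l => Fn f (map (subst s) l)
  end.

Inductive ctx (r : term -> term -> Prop) : term -> term -> Prop :=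
| ctx_root s t : r s t -> ctx r s t
| ctx_pub s t : ctx r s t -> ctx r (Pub s) (Pub t)
| ctx_sign1 s t u : ctx r s t -> ctx r (Sign s u) (Sign t u)
| ctx_sign2 s t u : ctx r s t -> ctx r (Sign u s) (Sign u t)
| ctx_blind1 s t u : ctx r s t -> ctx r (Blind s u) (Blind t u)
| ctx_blind2 s t u : ctx r s t -> ctx r (Blind u s) (Blind u t)
| ctx_pair1 s t u : ctx r s t -> ctx r (Pair s u) (Pair t u)
| ctx_pair2 s t u : ctx r s t -> ctx r (Pair u s) (Pair u t)
| ctx_enc1 s t u : ctx r s t -> ctx r (Enc s u) (Enc t u)
| ctx_enc2 s t u : ctx r s t -> ctx r (Enc u s) (Enc u t)
| ctx_fn f l1 l2 s t : ctx r s t -> ctx r (Fn f (l1 ++ s :: l2)) (Fn f (l1 ++ t :: l2)).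

Inductive ac_root : term -> term -> Prop :=
| ac_comm f a b : ac f = true -> ac_root (Fn f [a; b]) (Fn f [b; a])
| ac_assoc f a b c : ac f = true ->
    ac_root (Fn f [a; Fn f [b; c]]) (Fn f [Fn f [a; b]; c]).

Definition acEq : term -> term -> Prop := clos_refl_sym_trans term (ctx ac_root).

Definition rule_set := term -> term -> Prop.
Definition RE : rule_set := fun l r => In (l, r) R.
Definition Ri (i : nat) : rule_set := fun l r => In (l, r) R /\ pure i l /\ pure i r.

Inductive rroot (P : rule_set) : term -> term -> Prop :=
| rroot_intro l r s : P l r -> rroot P (subst s l) (subst s r).

Definition rstep (P : rule_set) : term -> term -> Prop := ctx (rroot P).

Definition rstep_mod (P : rule_set) (s t : term) : Prop :=
  exists s' t', acEq s s' /\ rstep P s' t' /\ acEq t' t.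

Definition eqR (P : rule_set) : term -> term -> Prop :=
  clos_refl_sym_trans term (fun s t => rstep P s t \/ ctx ac_root s t).

Definition terminating_mod (P : rule_set) : Prop :=
  well_founded (fun t s => rstep_mod P s t).

Definition CR_mod (P : rule_set) : Prop :=
  forall s t, eqR P s t ->
  exists u v, clos_refl_trans term (rstep_mod P) s u /\
              clos_refl_trans term (rstep_mod P) t v /\ acEq u v.

Definition eqE : term -> term -> Prop := eqR RE.

Definition irreducible (t : term) : Prop := ~ exists u, rstep_mod RE t u.

Definition is_nf (M N : term) : Prop :=
  clos_refl_trans term (rstep_mod RE) M N /\ irreducible N.

Record valid_theory : Prop := {
  vt_finite : exists n, forall f, ti f < n;
  vt_ac_arity : forall f, ac f = true -> ar f = 2;
  vt_ac_unique : forall f g, ac f = true -> ac g = true -> ti f = ti g -> f = g;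
  vt_rules_pure : forall l r, In (l, r) R -> exists i, pure i l /\ pure i r;
  vt_rules_wf : forall l r, In (l, r) R -> wf l /\ wf r;
  vt_terminating : terminating_mod RE;
  vt_confluent : CR_mod RE;
  vt_components : forall i, terminating_mod (Ri i) /\ CR_mod (Ri i)
}.

Definition guarded (t : term) : Prop :=
  match t with Fn _ _ => False | _ => True end.

Definition cross_subterm (N t : term) : Prop :=
  exists g args f fargs, subterm (Fn g args) t /\ In N args /\
    N = Fn f fargs /\ ti f <> ti g.

(* t = C[M_1,...,M_k] for an E_i-context C and M_l in G *)
Inductive ctx_inst (i : nat) (G : list term) : term -> Prop :=
| ci_hole t : In t G -> ctx_inst i G t
| ci_fn f l : ti f = i -> length l = ar f ->
    (forall a, In a l -> ctx_inst i G a) -> ctx_inst i G (Fn f l).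

Inductive Nd (G : list term) : term -> Prop :=
| N_id M : In M G -> Nd G M
| N_eE M K : Nd G (Enc M K) -> Nd G K -> Nd G M
| N_eI M K : Nd G M -> Nd G K -> Nd G (Enc M K)
| N_pE1 M N : Nd G (Pair M N) -> Nd G M
| N_pE2 M N : Nd G (Pair M N) -> Nd G N
| N_pI M N : Nd G M -> Nd G N -> Nd G (Pair M N)
| N_signE M K : Nd G (Sign M K) -> Nd G (Pub K) -> Nd G M
| N_signI M K : Nd G M -> Nd G K -> Nd G (Sign M K)
| N_blindE1 M K : Nd G (Blind M K) -> Nd G K -> Nd G M
| N_blindI M K : Nd G M -> Nd G K -> Nd G (Blind M K)
| N_blindE2 M Rr K : Nd G (Sign (Blind M Rr) K) -> Nd G Rr -> Nd G (Sign M K)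
| N_gI f l : length l = ar f -> (forall a, In a l -> Nd G a) -> Nd G (Fn f l)
| N_approx M N : Nd G N -> eqE M N -> wf M -> Nd G M.

Definition nf_seq (G : list term) (T : term) : Prop :=
  (forall t, In t G -> wf t /\ irreducible t) /\ wf T /\ irreducible T.

Inductive Dd : list term -> term -> Prop :=
| D_id i G M : nf_seq G M -> (exists t, ctx_inst i G t /\ eqE M t) -> Dd G M
| D_cut G M T : nf_seq G T -> Dd G M -> Dd (M :: G) T -> Dd G T
| D_pL G M N T : nf_seq G T -> In (Pair M N) G -> Dd (M :: N :: G) T -> Dd G T
| D_pR G M N : nf_seq G (Pair M N) -> Dd G M -> Dd G N -> Dd G (Pair M N)
| D_eL G M K N : nf_seq G N -> In (Enc M K) G -> Dd G K -> Dd (M :: K :: G) N -> Dd G N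
| D_eR G M K : nf_seq G (Enc M K) -> Dd G M -> Dd G K -> Dd G (Enc M K)
| D_signL G M K L N : nf_seq G N -> In (Sign M K) G -> In (Pub L) G -> acEq K L ->
    Dd (M :: G) N -> Dd G N
| D_signR G M K : nf_seq G (Sign M K) -> Dd G M -> Dd G K -> Dd G (Sign M K)
| D_blindL1 G M K N : nf_seq G N -> In (Blind M K) G -> Dd G K ->
    Dd (M :: K :: G) N -> Dd G N
| D_blindR G M K : nf_seq G (Blind M K) -> Dd G M -> Dd G K -> Dd G (Blind M K)
| D_blindL2 G M Rr K N : nf_seq G N -> In (Sign (Blind M Rr) K) G -> Dd G Rr ->
    Dd (Sign M K :: Rr :: G) N -> Dd G N
| D_gs G A M : nf_seq G M -> guarded A ->
    (exists t, (In t G \/ t = M) /\ subterm A t) ->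
    Dd G A -> Dd (A :: G) M -> Dd G M
| D_cs G N M : nf_seq G M ->
    (exists t, (In t G \/ t = M) /\ cross_subterm N t) ->
    Dd G N -> Dd (N :: G) M -> Dd G M.

End Theory.

(* Soundness: every rule of D is derivable in N; the left rules are N-eliminations applied to
   hypotheses, and id_{E_i} is a stack of g_I rules followed by the rule (≈).

   Completeness: by induction on the N-derivation, simulating each rule on normal forms.
   Left-hand sides of rewrite rules and of the AC axioms are headed by symbols of Σ_E (a
   variable left-hand side would rewrite forever), so the normal form of a constructor-headed
   term has the same constructor and its arguments are E-equal to the original ones.  An
   N-elimination thus becomes a cut on the normal form of its major premise followed by the
   matching left rule of D, an N-introduction becomes the right rule, and (≈) and g_I become
   id_{E_i}.  For sign_E, confluence modulo AC turns the E-equality of the two normal-form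
   keys into the AC-equality that sign_L demands. *)

From Stdlib Require Import List Relations Classical Arith.
Import ListNotations.
Set Implicit Arguments.
Unset Strict Implicit.

Lemma Forall2_reflexive {A} (r : A -> A -> Prop) (l : list A) :
  (forall x, r x x) -> Forall2 r l l.
Proof. intros Hr; induction l; constructor; auto. Qed.

Lemma Forall2_transitive {A} (r : A -> A -> Prop) (l1 l2 l3 : list A) :
  (forall x y z, r x y -> r y z -> r x z) ->
  Forall2 r l1 l2 -> Forall2 r l2 l3 -> Forall2 r l1 l3.
Proof.
  intros Hr H12; revert l3; induction H12; intros l3 H23; inversion H23; constructor; eauto.
Qed.

(** * Terms and one-hole contexts *)

Section Terms.
Context {F : Type}.
Notation term := (term F).

Fixpoint term_args_ind (P : term -> Prop)
    (IH : forall t, (forall a, In a (args_of t) -> P a) -> P t) (t : term) : P t :=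
  IH t (proj1 (Forall_forall P (args_of t))
    (match t as u return Forall P (args_of u) with
     | Name _ | Var _ => Forall_nil P
     | Pub b => Forall_cons _ (term_args_ind IH b) (Forall_nil P)
     | Sign b c | Blind b c | Pair b c | Enc b c =>
         Forall_cons _ (term_args_ind IH b)
           (Forall_cons _ (term_args_ind IH c) (Forall_nil P))
     | Fn _ l =>
         (fix args (l : list term) : Forall P l :=
            match l with
            | [] => Forall_nil P
            | b :: l' => Forall_cons _ (term_args_ind IH b) (args l')
            end) l
     end)).

Lemma subterm_arg (a t : term) : In a (args_of t) -> subterm a t.
Proof. intro Ha; now apply rt_step. Qed.

Lemma subterm_of_arg (x a t : term) : subterm x a -> In a (args_of t) -> subterm x t.
Proof. intros Hx Ha; eapply rt_trans; [exact Hx | now apply subterm_arg]. Qed.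

Lemma subterm_subst (s : nat -> term) (a t : term) :
  subterm a t -> subterm (subst s a) (subst s t).
Proof.
  induction 1 as [a t Ha| |]; [| apply rt_refl | eapply rt_trans; eauto].
  apply rt_step; destruct t; simpl in *; intuition (subst; auto using in_map).
Qed.

Lemma subst_id_on (s : nat -> term) (t : term) :
  (forall y, subterm (Var y) t -> s y = Var y) -> subst s t = t.
Proof.
  induction t as [t IH] using term_args_ind; intros Hs.
  assert (Hargs : forall a, In a (args_of t) -> subst s a = a).
  { intros a Ha; apply IH; [exact Ha |].
    intros y Hy; apply Hs; eapply subterm_of_arg; eauto. }
  destruct t; simpl in *; try (apply Hs, rt_refl); f_equal; auto.
  transitivity (map id l); [now apply map_ext_in | apply map_id].
Qed.

Ltac ctx_congruence :=
  first [ apply ctx_pub | apply ctx_sign1 | apply ctx_sign2 | apply ctx_blind1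
        | apply ctx_blind2 | apply ctx_pair1 | apply ctx_pair2 | apply ctx_enc1
        | apply ctx_enc2 | apply ctx_fn ].

Lemma ctx_mono (P Q : term -> term -> Prop) (s t : term) :
  (forall a b, P a b -> Q a b) -> ctx P s t -> ctx Q s t.
Proof. intros HPQ H; induction H; [apply ctx_root; auto | ctx_congruence; auto ..]. Qed.

Lemma ctx_converse (P : term -> term -> Prop) (s t : term) :
  ctx P s t -> ctx (fun a b => P b a) t s.
Proof. induction 1; [now apply ctx_root | ctx_congruence; auto ..]. Qed.

Lemma ctx_union (P Q : term -> term -> Prop) (s t : term) :
  ctx (fun a b => P a b \/ Q a b) s t -> ctx P s t \/ ctx Q s t.
Proof.
  induction 1;
    [destruct H; [left | right]; now apply ctx_root
    | destruct IHctx; [left | right]; ctx_congruence; assumption ..].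
Qed.

Definition hole_context (C : term -> term) : Prop :=
  forall P s t, ctx P s t -> ctx P (C s) (C t).

Lemma hole_context_of_arg (a t : term) : In a (args_of t) ->
  exists C, hole_context C /\ t = C a /\ forall x, In x (args_of (C x)).
Proof.
  destruct t as [| |u|u v|u v|u v|u v|f l]; simpl; intros Ha; try contradiction;
    repeat destruct Ha as [<-|Ha]; try contradiction;
    [ exists (@Pub F) | exists (fun x => Sign x v) | exists (fun x => Sign u x)
    | exists (fun x => Blind x v) | exists (fun x => Blind u x)
    | exists (fun x => Pair x v) | exists (fun x => Pair u x)
    | exists (fun x => Enc x v) | exists (fun x => Enc u x)
    | destruct (in_split _ _ Ha) as (l1 & l2 & ->); exists (fun x => Fn f (l1 ++ x :: l2)) ];
    (split; [intros P s s' Hs; ctx_congruence; exact Hs | split; [reflexivity |]]);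
    intros; simpl; auto using in_or_app, in_eq.
Qed.

Lemma crst_map (r : term -> term -> Prop) (C : term -> term) (a b : term) :
  (forall x y, r x y -> r (C x) (C y)) ->
  clos_refl_sym_trans term r a b -> clos_refl_sym_trans term r (C a) (C b).
Proof.
  intros HC; induction 1; eauto using rst_step, rst_refl, rst_sym, rst_trans.
Qed.

Lemma crt_ctx_mono (P Q : term -> term -> Prop) (s t : term) :
  (forall a b, P a b -> Q a b) ->
  clos_refl_trans term (ctx P) s t -> clos_refl_trans term (ctx Q) s t.
Proof. intros HPQ; induction 1; eauto using rt_step, rt_refl, rt_trans, ctx_mono. Qed.

Lemma crt_ctx_hole (P : term -> term -> Prop) (C : term -> term) (a b : term) :
  hole_context C -> clos_refl_trans term (ctx P) a b ->
  clos_refl_trans term (ctx P) (C a) (C b).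
Proof. intros HC; induction 1; eauto using rt_step, rt_refl, rt_trans. Qed.

Lemma crt_ctx_Fn_map (P : term -> term -> Prop) (f : F) (g : term -> term) (l : list term) :
  (forall a, In a l -> clos_refl_trans term (ctx P) a (g a)) ->
  clos_refl_trans term (ctx P) (Fn f l) (Fn f (map g l)).
Proof.
  intros Hg; enough (H : forall p, clos_refl_trans term (ctx P) (Fn f (p ++ l)) (Fn f (p ++ map g l)))
    by exact (H []).
  induction l as [| a l IH]; intros p; [apply rt_refl |].
  apply rt_trans with (Fn f (p ++ g a :: l)).
  - apply (crt_ctx_hole (C := fun z => Fn f (p ++ z :: l))); [intros Q s t Hst; now apply ctx_fn |].
    apply Hg; now left.
  - specialize (IH (fun x Hx => Hg x (or_intror Hx)) (p ++ [g a])).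
    now rewrite <- !app_assoc in IH.
Qed.

Lemma rstep_under_subterm (P : rule_set F) (a b u : term) :
  subterm a b -> rstep P a u -> exists v, rstep P b v /\ subterm u v.
Proof.
  intros Hab; revert u; induction Hab as [a b Hab | | a b c _ IH1 _ IH2]; intros u Hu.
  - destruct (hole_context_of_arg Hab) as (C & HC & -> & HCx).
    exists (C u); split; [now apply HC | now apply subterm_arg].
  - exists u; split; [assumption | apply rt_refl].
  - destruct (IH1 u Hu) as (v & Hv & Huv); destruct (IH2 v Hv) as (w & Hw & Hvw).
    exists w; split; [assumption | eapply rt_trans; eauto].
Qed.

Definition same_head (t u : term) : Prop :=
  match t, u with
  | Name n, Name m => n = m
  | Var x, Var y => x = y
  | Pub _, Pub _ | Sign _ _, Sign _ _ | Blind _ _, Blind _ _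
  | Pair _ _, Pair _ _ | Enc _ _, Enc _ _ | Fn _ _, Fn _ _ => True
  | _, _ => False
  end.

Lemma same_head_refl (t : term) : same_head t t.
Proof. destruct t; simpl; auto. Qed.

Lemma same_head_trans (t u v : term) : same_head t u -> same_head u v -> same_head t v.
Proof. destruct t, u, v; simpl; intros; try contradiction; auto; congruence. Qed.

Lemma same_head_guarded (t u : term) : same_head t u -> guarded t -> guarded u.
Proof. destruct t, u; simpl; tauto. Qed.

Section GuardedSteps.
Variable P : term -> term -> Prop.
Hypothesis P_unguarded : forall s t, P s t -> ~ guarded s.

Lemma ctx_guarded_step (t u : term) : ctx P t u -> guarded t ->
  same_head t u /\ Forall2 (clos_refl_trans term (ctx P)) (args_of t) (args_of u).
Proof.
  destruct 1 as [t u H | | | | | | | | | |]; simpl; intros Hg;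
    [ now destruct (P_unguarded H) | .. ]; try contradiction;
    split; try exact I; repeat (apply Forall2_cons || apply Forall2_nil);
    first [apply rt_step; assumption | apply rt_refl].
Qed.

Lemma ctx_guarded_steps (t u : term) : clos_refl_trans term (ctx P) t u -> guarded t ->
  same_head t u /\ Forall2 (clos_refl_trans term (ctx P)) (args_of t) (args_of u).
Proof.
  induction 1 as [t u H | t | t u v _ IH1 _ IH2]; intros Hg.
  - now apply ctx_guarded_step.
  - split; [apply same_head_refl | apply Forall2_reflexive, rt_refl].
  - destruct (IH1 Hg) as [H1 A1]; destruct (IH2 (same_head_guarded H1 Hg)) as [H2 A2].
    split; [eapply same_head_trans; eauto |].
    eapply Forall2_transitive; eauto using rt_trans.
Qed.

End GuardedSteps.

Definition binary_ctor (c : term -> term -> term) : Prop :=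
  forall M K, guarded (c M K) /\ args_of (c M K) = [M; K] /\
    forall t, same_head (c M K) t -> exists a b, t = c a b.

Ltac prove_binary_ctor :=
  intros M K; repeat split; intros [] Ht; simpl in Ht; try contradiction; eauto.

Lemma Sign_binary : binary_ctor (@Sign F). Proof. prove_binary_ctor. Qed.
Lemma Blind_binary : binary_ctor (@Blind F). Proof. prove_binary_ctor. Qed.
Lemma Pair_binary : binary_ctor (@Pair F). Proof. prove_binary_ctor. Qed.
Lemma Enc_binary : binary_ctor (@Enc F). Proof. prove_binary_ctor. Qed.

End Terms.

Section WellFormed.
Variables (F : Type) (ar : F -> nat).
Notation term := (term F).
Notation wf := (wf ar).

Lemma wf_arg (t a : term) : wf t -> In a (args_of t) -> wf a.
Proof. destruct 1; simpl; intros; intuition (subst; auto). Qed.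

Lemma wf_subterm (a t : term) : subterm a t -> wf t -> wf a.
Proof. induction 1; eauto using wf_arg. Qed.

Lemma wf_subst (s : nat -> term) (t : term) :
  wf t -> (forall x, subterm (Var x) t -> wf (s x)) -> wf (subst s t).
Proof.
  induction t as [t IH] using term_args_ind; intros Wt Ws.
  assert (Hargs : forall a, In a (args_of t) -> wf (subst s a)).
  { intros a Ha; apply IH; eauto using wf_arg.
    intros y Hy; apply Ws; eapply subterm_of_arg; eauto. }
  destruct t; simpl in *; try (apply Ws, rt_refl); inversion Wt; constructor; auto.
  - now rewrite length_map.
  - intros a Ha; apply in_map_iff in Ha as (b & <- & Hb); auto.
Qed.

Lemma ctx_wf (P : term -> term -> Prop) :
  (forall s t, P s t -> wf s -> wf t) -> forall s t, ctx P s t -> wf s -> wf t.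
Proof.
  intros HP s t H; induction H; intro W; [eapply HP; eauto | inversion W; subst ..];
    try (constructor; auto; fail).
  constructor; [rewrite length_app in *; assumption |].
  intros a Ha; apply in_app_or in Ha as [Ha | [<- | Ha]]; eauto using in_or_app, in_cons, in_eq.
Qed.

Lemma ac_root_wf (ac : F -> bool) (Har : forall f, ac f = true -> ar f = 2) (s t : term) :
  ac_root ac s t -> (wf s <-> wf t).
Proof.
  destruct 1 as [f a b Hf | f a b c Hf]; pose proof (Har f Hf) as Hlen;
    split; intro W; inversion W as [| | | | | | | ? ? Hl Hargs]; subst;
    constructor; auto; intros x Hx; simpl in Hx.
  - apply Hargs; simpl; tauto.
  - apply Hargs; simpl; tauto.
  - assert (Wbc : wf (Fn f [b; c])) by (apply Hargs; simpl; auto).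
    inversion Wbc as [| | | | | | | ? ? _ Hbc]; subst.
    destruct Hx as [<- | [<- | []]]; [constructor; auto | apply Hbc; simpl; auto].
    intros y [<- | [<- | []]]; [apply Hargs | apply Hbc]; simpl; auto.
  - assert (Wab : wf (Fn f [a; b])) by (apply Hargs; simpl; auto).
    inversion Wab as [| | | | | | | ? ? _ Hab]; subst.
    destruct Hx as [<- | [<- | []]]; [apply Hab; simpl; auto | constructor; auto].
    intros y [<- | [<- | []]]; [apply Hab | apply Hargs]; simpl; auto.
Qed.

End WellFormed.

(** * Rewriting modulo AC *)

Section Rewriting.
Variables (F : Type) (ar ti : F -> nat) (ac : F -> bool) (R : list (term F * term F)).
Hypothesis HE : valid_theory ar ti ac R.
Notation term := (term F).
Notation wf := (wf ar).
Notation acEq := (acEq ac).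
Notation eqE := (eqE ac R).
Notation irreducible := (irreducible ac R).
Notation rstep_modE := (rstep_mod ac (RE R)).
Notation rewrites := (clos_refl_trans term rstep_modE).

(* [steps] over-approximates rewriting modulo AC by single rule and AC steps; none of them
   has a guarded redex, so along [steps] a guarded term keeps its head (ctx_guarded_steps). *)
Definition ac_step (s t : term) : Prop := ac_root ac s t \/ ac_root ac t s.
Definition root_step (s t : term) : Prop := rroot (RE R) s t \/ ac_step s t.
Notation ac_steps := (clos_refl_trans term (ctx ac_step)).
Notation steps := (clos_refl_trans term (ctx root_step)).

Lemma rstep_mod_of_rstep (s t : term) : rstep (RE R) s t -> rstep_modE s t.
Proof. intro H; exists s, t; repeat split; auto; apply rst_refl. Qed.

Lemma rstep_invariant_absurd (P : term -> Prop) :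
  (forall t, P t -> exists u, rstep (RE R) t u /\ P u) -> forall t, ~ P t.
Proof.
  intros Hstep t; induction (vt_terminating HE t) as [t _ IH]; intros Ht.
  destruct (Hstep t Ht) as (u & Htu & Hu).
  exact (IH u (rstep_mod_of_rstep Htu) Hu).
Qed.

Lemma rule_lhs_unguarded (l r : term) : In (l, r) R -> ~ guarded l.
Proof.
  intros Hr; destruct (vt_rules_pure HE _ _ Hr) as (i & Hl & _).
  destruct Hl as [y | f ls]; [intros _ | simpl; auto].
  refine (rstep_invariant_absurd (P := fun _ => True) _ (t := Name 0) I).
  intros t _; exists (subst (fun _ => t) r); split; [| exact I].
  apply ctx_root; change t with (subst (fun _ => t) (Var y)) at 1; now constructor.
Qed.

(* Otherwise [l] rewrites to an instance of [r] containing [l] again. *)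
Lemma rule_rhs_vars (l r : term) (x : nat) :
  In (l, r) R -> subterm (Var x) r -> subterm (Var x) l.
Proof.
  intros Hr Hx; apply NNPP; intros Hnx.
  set (s := fun y => if Nat.eqb y x then l else Var y).
  assert (Hl : subst s l = l).
  { apply subst_id_on; intros y Hy; unfold s.
    destruct (Nat.eqb_spec y x); [subst; contradiction | reflexivity]. }
  assert (Hstep : rstep (RE R) l (subst s r)).
  { apply ctx_root; rewrite <- Hl at 1; now constructor. }
  assert (Hsub : subterm l (subst s r)).
  { apply (subterm_subst s) in Hx; simpl in Hx; unfold s in Hx.
    now rewrite Nat.eqb_refl in Hx. }
  refine (rstep_invariant_absurd (P := subterm l) _ (rt_refl _ _ l)).
  intros t Ht; destruct (rstep_under_subterm Ht Hstep) as (u & Htu & Hu).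
  exists u; split; [assumption | eapply rt_trans; [exact Hsub | exact Hu]].
Qed.

Lemma rroot_unguarded (s t : term) : rroot (RE R) s t -> ~ guarded s.
Proof.
  destruct 1 as [l r sb Hr]; pose proof (rule_lhs_unguarded Hr) as Hl.
  destruct l; simpl in *; tauto.
Qed.

Lemma ac_root_unguarded (s t : term) : ac_root ac s t -> ~ guarded s /\ ~ guarded t.
Proof. destruct 1; simpl; auto. Qed.

Lemma ac_step_unguarded (s t : term) : ac_step s t -> ~ guarded s.
Proof. intros [H | H]; apply ac_root_unguarded in H; tauto. Qed.

Lemma root_step_unguarded (s t : term) : root_step s t -> ~ guarded s.
Proof. intros [H | H]; [exact (rroot_unguarded H) | exact (ac_step_unguarded H)]. Qed.

Lemma rroot_wf (s t : term) : rroot (RE R) s t -> wf s -> wf t.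
Proof.
  destruct 1 as [l r sb Hr]; intros Ws.
  destruct (vt_rules_wf HE _ _ Hr) as [Wl Wr].
  apply wf_subst; [assumption |]; intros x Hx.
  eapply wf_subterm; [| exact Ws].
  exact (subterm_subst sb (rule_rhs_vars Hr Hx)).
Qed.

Lemma acEq_wf (s t : term) : acEq s t -> (wf s <-> wf t).
Proof.
  pose proof (ac_root_wf (vt_ac_arity HE)) as Hac.
  induction 1 as [s t H | | |]; try tauto; split.
  - apply (ctx_wf (P := ac_root ac)); [intros a b Hab; apply (Hac _ _ Hab) | exact H].
  - apply (ctx_wf (P := fun a b => ac_root ac b a)); [intros a b Hab; apply (Hac _ _ Hab) |].
    now apply ctx_converse.
Qed.

Lemma rstep_mod_wf (s t : term) : rstep_modE s t -> wf s -> wf t.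
Proof.
  intros (s' & t' & H1 & H2 & H3) W.
  apply (acEq_wf H3); eapply ctx_wf; [exact rroot_wf | exact H2 | now apply (acEq_wf H1)].
Qed.

Lemma rewrites_wf (s t : term) : rewrites s t -> wf s -> wf t.
Proof. induction 1; eauto using rstep_mod_wf. Qed.

Lemma ac_step_sym (s t : term) : ctx ac_step s t -> ctx ac_step t s.
Proof.
  intros H; apply (ctx_mono (P := fun a b => ac_step b a)); [unfold ac_step; tauto |].
  now apply ctx_converse.
Qed.

Lemma acEq_ac_steps (s t : term) : acEq s t -> ac_steps s t.
Proof.
  induction 1 as [s t H | | s t _ IH | ]; eauto using rt_refl, rt_trans.
  - apply rt_step; revert H; apply ctx_mono; unfold ac_step; tauto.
  - clear -IH; induction IH; eauto using rt_step, rt_refl, rt_trans, ac_step_sym.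
Qed.

Lemma ac_steps_acEq (s t : term) : ac_steps s t -> acEq s t.
Proof.
  induction 1 as [s t H | | ]; [| apply rst_refl | eapply rst_trans; eauto].
  destruct (ctx_union H) as [H1 | H1].
  - now apply rst_step.
  - apply rst_sym, rst_step; exact (ctx_converse H1).
Qed.

Lemma acEq_eqE (s t : term) : acEq s t -> eqE s t.
Proof.
  induction 1; [apply rst_step; now right | apply rst_refl | now apply rst_sym
               | eapply rst_trans; eauto].
Qed.

Lemma steps_eqE (s t : term) : steps s t -> eqE s t.
Proof.
  induction 1 as [s t H | | ]; [| apply rst_refl | eapply rst_trans; eauto].
  destruct (ctx_union H) as [H1 | H1].
  - apply rst_step; now left.
  - apply acEq_eqE, ac_steps_acEq, rt_step, H1.
Qed.

Lemma rewrites_steps (s t : term) : rewrites s t -> steps s t.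
Proof.
  assert (Hac : forall a b, acEq a b -> steps a b).
  { intros a b Hab; apply (crt_ctx_mono (P := ac_step)); [now right |].
    now apply acEq_ac_steps. }
  induction 1 as [s t (s' & t' & H1 & H2 & H3) | | ]; eauto using rt_refl, rt_trans.
  apply rt_trans with s'; [now apply Hac |]; apply rt_trans with t'; [| now apply Hac].
  apply rt_step; revert H2; apply ctx_mono; now left.
Qed.

Lemma steps_Pub (K t : term) : steps (Pub K) t -> exists c, t = Pub c /\ steps K c.
Proof.
  intros H; destruct (ctx_guarded_steps root_step_unguarded H I) as [Hs Hargs].
  destruct t; simpl in Hs; try contradiction.
  inversion Hargs; eauto.
Qed.

Lemma steps_binary (c : term -> term -> term) (M K t : term) : binary_ctor c ->
  steps (c M K) t -> exists a b, t = c a b /\ steps M a /\ steps K b.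
Proof.
  intros Hc H; destruct (Hc M K) as (Hg & HMK & Hhead).
  destruct (ctx_guarded_steps root_step_unguarded H Hg) as [Hs Hargs].
  destruct (Hhead t Hs) as (a & b & ->); exists a, b; split; [reflexivity |].
  destruct (Hc a b) as (_ & Hab & _); rewrite HMK, Hab in Hargs.
  inversion Hargs as [| ? ? ? ? HMa Hb]; inversion Hb; auto.
Qed.

Lemma irreducible_arg (t a : term) : irreducible t -> In a (args_of t) -> irreducible a.
Proof.
  intros Ht Ha [u (a' & u' & H1 & H2 & H3)].
  destruct (hole_context_of_arg Ha) as (C & HC & -> & _).
  apply Ht; exists (C u), (C a'), (C u'); repeat split; [| now apply HC |];
    apply crst_map; auto.
Qed.

Lemma irreducible_Sign (a b : term) : irreducible a -> irreducible b -> irreducible (Sign a b).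
Proof.
  intros Ia Ib [w (s' & t' & H1 & H2 & H3)].
  destruct (ctx_guarded_steps ac_step_unguarded (acEq_ac_steps H1) I) as [Hs Hargs].
  destruct s' as [| | | a' b' | | | |]; simpl in Hs; try contradiction.
  inversion Hargs as [| ? ? ? ? Ha Hb']; inversion Hb' as [| ? ? ? ? Hb _]; subst.
  inversion H2 as [? ? Hroot | | | | | | | | | |]; subst.
  - exact (rroot_unguarded Hroot I).
  - apply Ia; exists t, a', t; repeat split; [now apply ac_steps_acEq | assumption | apply rst_refl].
  - apply Ib; exists t, b', t; repeat split; [now apply ac_steps_acEq | assumption | apply rst_refl].
Qed.

Lemma rewrites_irreducible_eq (s t : term) : rewrites s t -> irreducible s -> s = t.
Proof.
  intros H Is; apply clos_rt_rt1n in H; destruct H as [| ? u ? Hsu]; [reflexivity |].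
  destruct Is; eauto.
Qed.

Lemma irreducible_eqE_acEq (s t : term) :
  eqE s t -> irreducible s -> irreducible t -> acEq s t.
Proof.
  intros Hst Is It; destruct (vt_confluent HE Hst) as (u & v & Hsu & Htv & Huv).
  now rewrite (rewrites_irreducible_eq Hsu Is), (rewrites_irreducible_eq Htv It).
Qed.

(** * The calculi N and D *)

Notation Nd := (Nd ar ac R).
Notation Dd := (Dd ar ti ac R).

Definition normal (t : term) : Prop := wf t /\ irreducible t.
Definition normal_ctx (G : list term) : Prop := forall t, In t G -> normal t.

Lemma normal_arg (t a : term) : normal t -> In a (args_of t) -> normal a.
Proof. intros [W I] Ha; split; [exact (wf_arg W Ha) | exact (irreducible_arg I Ha)]. Qed.

Lemma normal_ctx_cons (x : term) (G : list term) :
  normal x -> normal_ctx G -> normal_ctx (x :: G).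
Proof. intros Nx NG t [<- | Ht]; auto. Qed.

Lemma Dd_normal (G : list term) (T : term) : Dd G T -> normal_ctx G /\ normal T.
Proof. destruct 1; assumption. Qed.

Lemma Nd_wf (G : list term) (M : term) : (forall t, In t G -> wf t) -> Nd G M -> wf M.
Proof.
  intros HG; induction 1; auto;
    repeat match goal with W : wf (_ _) |- _ => inversion W; subst; clear W end;
    first [assumption | constructor; auto].
Qed.

Lemma Nd_ctx_inst (G Γ : list term) (i : nat) (t : term) :
  ctx_inst ar ti i Γ t -> (forall x, In x Γ -> Nd G x) -> Nd G t.
Proof. intros H HΓ; induction H; [now apply HΓ | now apply N_gI]. Qed.

Lemma Dd_sound (Γ : list term) (T : term) :
  Dd Γ T -> forall G, (forall x, In x Γ -> Nd G x) -> Nd G T.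
Proof.
  induction 1 as [i Γ M [_ [WM _]] (t & Ht & HMt) | Γ M T _ _ IHM _ IHT | Γ M N T _ HP _ IH
    | Γ M N _ _ IHM _ IHN | Γ M K N _ HP _ IHK _ IH | Γ M K _ _ IHM _ IHK
    | Γ M K L N [NΓ _] HS HP HKL _ IH | Γ M K _ _ IHM _ IHK
    | Γ M K N _ HP _ IHK _ IH | Γ M K _ _ IHM _ IHK
    | Γ M Rr K N _ HP _ IHR _ IH | Γ A M _ _ _ _ IHA _ IH | Γ N M _ _ _ IHN _ IH ];
    intros G HG.
  - exact (N_approx (Nd_ctx_inst Ht HG) HMt WM).
  - apply IHT; intros x [<- | Hx]; auto.
  - apply IH; intros x [<- | [<- | Hx]]; [exact (N_pE1 (HG _ HP)) | exact (N_pE2 (HG _ HP)) | auto].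
  - apply N_pI; auto.
  - apply IH; intros x [<- | [<- | Hx]]; [exact (N_eE (HG _ HP) (IHK G HG)) | auto | auto].
  - apply N_eI; auto.
  - apply IH; intros x [<- | Hx]; [apply N_signE with K; [now apply HG |] | auto].
    destruct (NΓ _ HP) as [WL _]; inversion WL; subst.
    apply N_approx with (Pub L); [now apply HG | | apply wf_pub, (acEq_wf HKL); assumption].
    apply crst_map; [intros a b [Hab | Hab]; [left | right]; now apply ctx_pub | now apply acEq_eqE].
  - apply N_signI; auto.
  - apply IH; intros x [<- | [<- | Hx]]; [exact (N_blindE1 (HG _ HP) (IHK G HG)) | auto | auto].
  - apply N_blindI; auto.
  - apply IH; intros x [<- | [<- | Hx]]; [exact (N_blindE2 (HG _ HP) (IHR G HG)) | auto | auto].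
  - apply IH; intros x [<- | Hx]; auto.
  - apply IH; intros x [<- | Hx]; auto.
Qed.

Lemma ctx_inst_incl (i : nat) (G G' : list term) (t : term) :
  ctx_inst ar ti i G t -> incl G G' -> ctx_inst ar ti i G' t.
Proof. intros H Hincl; induction H; [apply ci_hole | apply ci_fn]; auto. Qed.

Ltac weaken_premise IH Hincl NG' Hprem :=
  apply IH;
  [ repeat (apply incl_cons; [now left | apply incl_tl]); exact Hincl
  | let N := fresh in pose proof (proj1 (Dd_normal Hprem)) as N;
    repeat (apply normal_ctx_cons; [apply N; auto with datatypes |]); exact NG' ].

Lemma Dd_weaken (G G' : list term) (T : term) :
  Dd G T -> incl G G' -> normal_ctx G' -> Dd G' T.
Proof.
  intros HD; revert G'.
  induction HD as [i G M HT Hinst | G M T HT HM IHM HMT IHMT | G M N T HT HP HMN IH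
    | G M N HT HM IHM HN IHN | G M K N HT HEnc HK IHK HMK IH | G M K HT HM IHM HK IHK
    | G M K L N HT HS HP HKL HM IH | G M K HT HM IHM HK IHK
    | G M K N HT HB HK IHK HMK IH | G M K HT HM IHM HK IHK
    | G M Rr K N HT HS HR IHR HSR IH | G A M HT HA Hsub HDA IHA HAM IH
    | G N M HT Hsub HN IHN HNM IH ];
    intros G' Hincl NG'; pose proof (conj NG' (proj2 HT)) as HT'.
  - apply D_id with i; [exact HT' |].
    destruct Hinst as (t & Ht & HMt); exists t; split; [exact (ctx_inst_incl Ht Hincl) | exact HMt].
  - apply D_cut with M; [exact HT' | now apply IHM | weaken_premise IHMT Hincl NG' HMT].
  - apply D_pL with M N; [exact HT' | now apply Hincl | weaken_premise IH Hincl NG' HMN].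
  - apply D_pR; auto.
  - apply D_eL with M K; [exact HT' | now apply Hincl | now apply IHK | weaken_premise IH Hincl NG' HMK].
  - apply D_eR; auto.
  - apply D_signL with M K L; [exact HT' | now apply Hincl | now apply Hincl | exact HKL
                               | weaken_premise IH Hincl NG' HM].
  - apply D_signR; auto.
  - apply D_blindL1 with M K; [exact HT' | now apply Hincl | now apply IHK | weaken_premise IH Hincl NG' HMK].
  - apply D_blindR; auto.
  - apply D_blindL2 with M Rr K; [exact HT' | now apply Hincl | now apply IHR | weaken_premise IH Hincl NG' HSR].
  - apply D_gs with A; [exact HT' | exact HA | | now apply IHA | weaken_premise IH Hincl NG' HAM].
    destruct Hsub as (t & Ht & HAt); exists t; split; [| exact HAt].
    destruct Ht; [left; now apply Hincl | now right].
  - apply D_cs with N; [exact HT' | | now apply IHN | weaken_premise IH Hincl NG' HNM].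
    destruct Hsub as (t & Ht & HNt); exists t; split; [| exact HNt].
    destruct Ht; [left; now apply Hincl | now right].
Qed.

Lemma Dd_weaken_cons (G : list term) (X T : term) : Dd G T -> normal X -> Dd (X :: G) T.
Proof.
  intros HD NX; apply (Dd_weaken HD); [apply incl_tl, incl_refl |].
  exact (normal_ctx_cons NX (proj1 (Dd_normal HD))).
Qed.

Lemma Dd_cut (G : list term) (X T : term) : Dd G X -> Dd (X :: G) T -> Dd G T.
Proof.
  intros HX HT; destruct (Dd_normal HT) as [NXG NT].
  apply D_cut with X; [split; [intros t Ht; apply NXG; now right | exact NT] | exact HX | exact HT].
Qed.

Lemma Dd_hyp (G : list term) (X Y : term) :
  In X G -> normal_ctx G -> normal Y -> eqE Y X -> Dd G Y.
Proof.
  intros HX NG NY HYX; apply D_id with 0; [exact (conj NG NY) |].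
  exists X; split; [now apply ci_hole | exact HYX].
Qed.

Lemma Dd_conv (G : list term) (X Y : term) : Dd G X -> normal Y -> eqE Y X -> Dd G Y.
Proof.
  intros HX NY HYX; apply (Dd_cut HX), Dd_hyp with X; [now left | | exact NY | exact HYX].
  exact (normal_ctx_cons (proj2 (Dd_normal HX)) (proj1 (Dd_normal HX))).
Qed.

Lemma Dd_cut_list (X G : list term) (T : term) :
  (forall x, In x X -> Dd G x) -> Dd (X ++ G) T -> Dd G T.
Proof.
  revert G; induction X as [| a X IH]; intros G HX HT; [exact HT |].
  assert (Na : normal a) by exact (proj2 (Dd_normal (HX a (in_eq a X)))).
  apply (Dd_cut (HX a (in_eq a X))), IH.
  - intros x Hx; apply Dd_weaken_cons; [apply HX; now right | exact Na].
  - apply (Dd_weaken HT).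
    + intros x; simpl; rewrite !in_app_iff; simpl; tauto.
    + intros x; rewrite in_app_iff; intros [Hx | [<- | Hx]]; [| exact Na |];
        apply (proj1 (Dd_normal HT)); simpl; rewrite in_app_iff; auto.
Qed.

Lemma Dd_keyed_elim (c : term -> term -> term) (Hc : binary_ctor c)
    (rule : forall G M K N, nf_seq ar ac R G N -> In (c M K) G -> Dd G K ->
            Dd (M :: K :: G) N -> Dd G N)
    (G : list term) (a b : term) :
  Dd G (c a b) -> Dd G b -> Dd G a.
Proof.
  intros Hab Hb; destruct (Dd_normal Hab) as [NG Nab].
  destruct (Hc a b) as (_ & Hargs & _).
  assert (Na : normal a) by (apply (normal_arg Nab); rewrite Hargs; now left).
  apply (Dd_cut Hab), rule with a b.
  - split; [exact (normal_ctx_cons Nab NG) | exact Na].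
  - now left.
  - exact (Dd_weaken_cons Hb Nab).
  - apply Dd_hyp with a; [now left | | exact Na | apply rst_refl].
    repeat apply normal_ctx_cons; auto.
    apply (normal_arg Nab); rewrite Hargs; right; now left.
Qed.

Lemma Dd_pairL (G : list term) (a b : term) : Dd G (Pair a b) -> Dd G a /\ Dd G b.
Proof.
  intros Hab; destruct (Dd_normal Hab) as [NG Nab].
  assert (Na : normal a) by (apply (normal_arg Nab); now left).
  assert (Nb : normal b) by (apply (normal_arg Nab); right; now left).
  assert (NG' : normal_ctx (a :: b :: Pair a b :: G)) by (repeat apply normal_ctx_cons; auto).
  split; apply (Dd_cut Hab), D_pL with a b; try (now left);
    [split; [exact (normal_ctx_cons Nab NG) | exact Na] | 
    | split; [exact (normal_ctx_cons Nab NG) | exact Nb] | ].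
  - apply Dd_hyp with a; [now left | exact NG' | exact Na | apply rst_refl].
  - apply Dd_hyp with b; [right; now left | exact NG' | exact Nb | apply rst_refl].
Qed.

Lemma Dd_signL (G : list term) (a b c : term) :
  Dd G (Sign a b) -> Dd G (Pub c) -> acEq b c -> Dd G a.
Proof.
  intros Hab Hc Hbc; destruct (Dd_normal Hab) as [NG Nab]; destruct (Dd_normal Hc) as [_ Nc].
  assert (Na : normal a) by (apply (normal_arg Nab); now left).
  apply (Dd_cut Hab), (Dd_cut (Dd_weaken_cons Hc Nab)), D_signL with a b c.
  - split; [repeat apply normal_ctx_cons; auto | exact Na].
  - right; now left.
  - now left.
  - exact Hbc.
  - apply Dd_hyp with a; [now left | repeat apply normal_ctx_cons; auto | exact Na | apply rst_refl].
Qed.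

Lemma Dd_unblind (G : list term) (a r b : term) :
  Dd G (Sign (Blind a r) b) -> Dd G r -> Dd G (Sign a b).
Proof.
  intros Hs Hr; destruct (Dd_normal Hs) as [NG Ns].
  assert (Nar : normal (Blind a r)) by (apply (normal_arg Ns); now left).
  assert (Na : normal a) by (apply (normal_arg Nar); now left).
  assert (Nr : normal r) by (apply (normal_arg Nar); right; now left).
  assert (Nb : normal b) by (apply (normal_arg Ns); right; now left).
  assert (Nab : normal (Sign a b)).
  { split; [constructor; [apply Na | apply Nb] | apply irreducible_Sign; [apply Na | apply Nb]]. }
  apply (Dd_cut Hs), D_blindL2 with a r b.
  - split; [exact (normal_ctx_cons Ns NG) | exact Nab].
  - now left.
  - exact (Dd_weaken_cons Hr Ns).
  - apply Dd_hyp with (Sign a b); [now left | repeat apply normal_ctx_cons; auto | exact Nab | apply rst_refl].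
Qed.

Lemma steps_Sign (M K a b : term) : steps M a -> steps K b -> steps (Sign M K) (Sign a b).
Proof.
  intros HMa HKb; apply rt_trans with (Sign a K).
  - apply (crt_ctx_hole (C := fun z => Sign z K)); [intros P s t Hst; now apply ctx_sign1 | exact HMa].
  - apply (crt_ctx_hole (C := fun z => Sign a z)); [intros P s t Hst; now apply ctx_sign2 | exact HKb].
Qed.

(** * Simulating N on normal forms *)

Section NormalForms.
Variable nfun : term -> term.
Hypothesis Hnf : forall t, is_nf ac R t (nfun t).

Lemma normal_nf (t : term) : wf t -> normal (nfun t).
Proof. intros W; split; [exact (rewrites_wf (proj1 (Hnf t)) W) | exact (proj2 (Hnf t))]. Qed.

Lemma normal_ctx_nf (G : list term) : (forall t, In t G -> wf t) -> normal_ctx (map nfun G).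
Proof. intros HG x Hx; apply in_map_iff in Hx as (t & <- & Ht); auto using normal_nf. Qed.

Lemma nf_steps (t : term) : steps t (nfun t).
Proof. exact (rewrites_steps (proj1 (Hnf t))). Qed.

Lemma nf_eqE (t : term) : eqE t (nfun t).
Proof. exact (steps_eqE (nf_steps t)). Qed.

Lemma nf_binary (c : term -> term -> term) (M K : term) : binary_ctor c ->
  exists a b, nfun (c M K) = c a b /\ steps M a /\ steps K b.
Proof. intros Hc; exact (steps_binary Hc (nf_steps (c M K))). Qed.

Lemma nf_Pub (K : term) : exists c, nfun (Pub K) = Pub c /\ steps K c.
Proof. exact (steps_Pub (nf_steps (Pub K))). Qed.

Lemma Dd_nf_of_eqE (G : list term) (M X : term) : wf M -> eqE M X -> Dd G X -> Dd G (nfun M).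
Proof.
  intros W HMX HX; apply (Dd_conv HX (normal_nf W)).
  eapply rst_trans; [apply rst_sym, nf_eqE | exact HMX].
Qed.

Lemma Dd_of_nf_eqE (G : list term) (M X : term) : Dd G (nfun M) -> eqE M X -> normal X -> Dd G X.
Proof.
  intros HM HMX NX; apply (Dd_conv HM NX).
  eapply rst_trans; [apply rst_sym, HMX | apply nf_eqE].
Qed.

Lemma Dd_nf_intro (c : term -> term -> term) (Hc : binary_ctor c)
    (rule : forall G M K, nf_seq ar ac R G (c M K) -> Dd G M -> Dd G K -> Dd G (c M K))
    (G : list term) (M K : term) :
  wf (c M K) -> Dd G (nfun M) -> Dd G (nfun K) -> Dd G (nfun (c M K)).
Proof.
  intros W HM HK; destruct (nf_binary M K Hc) as (a & b & Hab & HMa & HKb).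
  pose proof (normal_nf W) as Nab; rewrite Hab in *.
  destruct (Hc a b) as (_ & Hargs & _).
  apply rule; [exact (conj (proj1 (Dd_normal HM)) Nab)
              | apply (Dd_of_nf_eqE HM (steps_eqE HMa)) | apply (Dd_of_nf_eqE HK (steps_eqE HKb))];
    apply (normal_arg Nab); rewrite Hargs; simpl; auto.
Qed.

Lemma Dd_nf_keyed_elim (c : term -> term -> term) (Hc : binary_ctor c)
    (rule : forall G M K N, nf_seq ar ac R G N -> In (c M K) G -> Dd G K ->
            Dd (M :: K :: G) N -> Dd G N)
    (G : list term) (M K : term) :
  wf M -> Dd G (nfun (c M K)) -> Dd G (nfun K) -> Dd G (nfun M).
Proof.
  intros W HMK HK; destruct (nf_binary M K Hc) as (a & b & Hab & HMa & HKb); rewrite Hab in HMK.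
  apply (Dd_nf_of_eqE W (steps_eqE HMa)), (Dd_keyed_elim Hc rule HMK).
  apply (Dd_of_nf_eqE HK (steps_eqE HKb)), (normal_arg (proj2 (Dd_normal HMK))).
  destruct (Hc a b) as (_ & -> & _); simpl; auto.
Qed.

Lemma Dd_nf_pairL (G : list term) (M N : term) :
  wf M -> wf N -> Dd G (nfun (Pair M N)) -> Dd G (nfun M) /\ Dd G (nfun N).
Proof.
  intros WM WN HMN; destruct (nf_binary M N Pair_binary) as (a & b & Hab & HMa & HNb).
  rewrite Hab in HMN; destruct (Dd_pairL HMN) as [Ha Hb].
  split; [exact (Dd_nf_of_eqE WM (steps_eqE HMa) Ha) | exact (Dd_nf_of_eqE WN (steps_eqE HNb) Hb)].
Qed.

Lemma Dd_nf_signL (G : list term) (M K : term) :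
  wf M -> Dd G (nfun (Sign M K)) -> Dd G (nfun (Pub K)) -> Dd G (nfun M).
Proof.
  intros WM HMK HK; destruct (nf_binary M K Sign_binary) as (a & b & Hab & HMa & HKb).
  destruct (nf_Pub K) as (c & Hc & HKc); rewrite Hab in HMK; rewrite Hc in HK.
  apply (Dd_nf_of_eqE WM (steps_eqE HMa)), (Dd_signL HMK HK).
  assert (Nb : normal b) by (apply (normal_arg (proj2 (Dd_normal HMK))); simpl; auto).
  assert (Nc : normal c) by (apply (normal_arg (proj2 (Dd_normal HK))); simpl; auto).
  apply irreducible_eqE_acEq; [| exact (proj2 Nb) | exact (proj2 Nc)].
  eapply rst_trans; [apply rst_sym, steps_eqE, HKb | apply steps_eqE, HKc].
Qed.

Lemma Dd_nf_unblind (G : list term) (M Rr K : term) :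
  wf (Sign M K) -> Dd G (nfun (Sign (Blind M Rr) K)) -> Dd G (nfun Rr) -> Dd G (nfun (Sign M K)).
Proof.
  intros WMK HS HR; destruct (nf_binary (Blind M Rr) K Sign_binary) as (x & b & Hxb & Hx & HKb).
  destruct (steps_binary Blind_binary Hx) as (a & r & -> & HMa & HRr); rewrite Hxb in HS.
  apply (Dd_nf_of_eqE WMK (steps_eqE (steps_Sign HMa HKb))), (Dd_unblind HS).
  apply (Dd_of_nf_eqE HR (steps_eqE HRr)).
  apply (normal_arg (t := Blind a r)); [apply (normal_arg (proj2 (Dd_normal HS))) |]; simpl; auto.
Qed.

Lemma Dd_nf_Fn (G : list term) (f : F) (l : list term) :
  wf (Fn f l) -> normal_ctx G -> (forall a, In a l -> Dd G (nfun a)) -> Dd G (nfun (Fn f l)).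
Proof.
  intros W NG Hl; assert (Wl : forall a, In a l -> wf a) by (intros a Ha; exact (wf_arg W Ha)).
  apply Dd_cut_list with (map nfun l); [intros x Hx; apply in_map_iff in Hx as (a & <- & Ha); auto |].
  apply D_id with (ti f).
  - split; [| exact (normal_nf W)].
    intros t Ht; apply in_app_or in Ht as [Ht | Ht]; [exact (normal_ctx_nf Wl Ht) | exact (NG t Ht)].
  - exists (Fn f (map nfun l)); split.
    + inversion W; apply ci_fn; [reflexivity | now rewrite length_map |].
      intros a Ha; apply ci_hole, in_or_app; now left.
    + eapply rst_trans; [apply rst_sym, nf_eqE |].
      apply steps_eqE, crt_ctx_Fn_map; intros a _; apply nf_steps.
Qed.

Lemma Nd_complete (G : list term) (M : term) :
  (forall t, In t G -> wf t) -> Nd G M -> Dd (map nfun G) (nfun M).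
Proof.
  intros HG HN; assert (W : forall X, Nd G X -> wf X) by (intros X; exact (Nd_wf HG)).
  induction HN as [M HM | M K HMK IHMK HK IHK | M K HM IHM HK IHK | M N HMN IH | M N HMN IH
    | M N HM IHM HN IHN | M K HMK IHMK HK IHK | M K HM IHM HK IHK | M K HMK IHMK HK IHK
    | M K HM IHM HK IHK | M Rr K HS IHS HR IHR | f l Hlen Hl IHl | M N HN IHN HMN WM ].
  - apply Dd_hyp with (nfun M); [now apply in_map | now apply normal_ctx_nf
                                | now apply normal_nf, HG | apply rst_refl].
  - exact (Dd_nf_keyed_elim Enc_binary (@D_eL _ _ _ _ _) (W _ (N_eE HMK HK)) IHMK IHK).
  - exact (Dd_nf_intro Enc_binary (@D_eR _ _ _ _ _) (W _ (N_eI HM HK)) IHM IHK).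
  - exact (proj1 (Dd_nf_pairL (W _ (N_pE1 HMN)) (W _ (N_pE2 HMN)) IH)).
  - exact (proj2 (Dd_nf_pairL (W _ (N_pE1 HMN)) (W _ (N_pE2 HMN)) IH)).
  - exact (Dd_nf_intro Pair_binary (@D_pR _ _ _ _ _) (W _ (N_pI HM HN)) IHM IHN).
  - exact (Dd_nf_signL (W _ (N_signE HMK HK)) IHMK IHK).
  - exact (Dd_nf_intro Sign_binary (@D_signR _ _ _ _ _) (W _ (N_signI HM HK)) IHM IHK).
  - exact (Dd_nf_keyed_elim Blind_binary (@D_blindL1 _ _ _ _ _) (W _ (N_blindE1 HMK HK)) IHMK IHK).
  - exact (Dd_nf_intro Blind_binary (@D_blindR _ _ _ _ _) (W _ (N_blindI HM HK)) IHM IHK).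
  - exact (Dd_nf_unblind (W _ (N_blindE2 HS HR)) IHS IHR).
  - exact (Dd_nf_Fn (W _ (N_gI f l Hlen Hl)) (normal_ctx_nf HG) IHl).
  - apply (Dd_nf_of_eqE WM (rst_trans _ _ _ _ _ HMN (nf_eqE N)) IHN).
Qed.

End NormalForms.

End Rewriting.

Theorem proposition6
  (F : Type) (ar ti : F -> nat) (ac : F -> bool) (R : list (term F * term F))
  (HE : valid_theory ar ti ac R)
  (nfun : term F -> term F) (Hnf : forall t, is_nf ac R t (nfun t))
  (G : list (term F)) (M : term F)
  (HG : forall t, In t G -> ground t /\ wf ar t) (HM : ground M /\ wf ar M) :
  Nd ar ac R G M <-> Dd ar ti ac R (map nfun G) (nfun M).
Proof.
  assert (HGwf : forall t, In t G -> wf ar t) by (intros t Ht; apply HG, Ht).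
  split.
  - exact (Nd_complete HE Hnf HGwf).
  - intros HD; apply N_approx with (nfun M); [| exact (nf_eqE Hnf M) | exact (proj2 HM)].
    apply (Dd_sound HE HD); intros x Hx; apply in_map_iff in Hx as (t & <- & Ht).
    apply N_approx with t; [now apply N_id | apply rst_sym, (nf_eqE Hnf) |].
    exact (proj1 (normal_nf HE Hnf (HGwf t Ht))).
Qed.
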